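(* Let $\varepsilon>0$, $\kappa\ge\frac14$, $\Delta t>0$, and set $\kappa^*=\kappa-\frac18$, $C_4=\frac{1}{1-e^{-2}}$, $\gamma^{(0)}=3C_4(1+\kappa)$, and $\alpha_0=\ln\Big(\frac{\gamma^{(0)}+\frac12\kappa}{\gamma^{(0)}-\frac12\kappa}\Big)$ (the unique positive solution of $\frac{e^{-\alpha_0}}{1-e^{-\alpha_0}}+\frac12=\frac{\gamma^{(0)}}{\kappa}$). Suppose $$A\ge \Big(\gamma^{(0)}-\frac{\kappa}{4}\Big)^4\alpha_0^{-2}\varepsilon^{-2}.$$ Then for every real periodic grid function $f$ with zero mean, $$\Big(\frac{\varepsilon^2}{2}+A\Delta t^2\Big)\|\Delta_N f\|_2^2+\kappa^*\|\nabla_N f\|_2^2+\Big\langle\Big(\frac{1}{\Delta t}\mathcal G_N-L_N\Big)f,f\Big\rangle\ge \gamma^{(0)}\|\nabla_N f\|_2^2.$$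
   Context: Setting: $\Omega=(0,1)^2$, $N=2K+1$, $h=1/N$, grid $x_i=ih$, $y_j=jh$; periodic grid functions have discrete Fourier expansions $f_{i,j}=\sum_{k,\ell=-K}^{K}\hat f_{k,\ell}\exp(2\pi\mathrm{i}(kx_i+\ell y_j))$. Spectral operators act as Fourier multipliers: $\mathcal D_{Nx}$, $\mathcal D_{Ny}$ by $2\pi\mathrm{i}k$, $2\pi\mathrm{i}\ell$; $\nabla_N f=(\mathcal D_{Nx}f,\mathcal D_{Ny}f)$; $\Delta_N$ by $-\lambda_{k,\ell}$, $\lambda_{k,\ell}=(2k\pi)^2+(2\ell\pi)^2$. Inner product $\langle f,g\rangle=h^2\sum_{i,j}f_{i,j}g_{i,j}$, $\|f\|_2=\langle f,f\rangle^{1/2}$. $L_N=\varepsilon^2\Delta_N^2-\kappa\Delta_N$ has multiplier $\Lambda_{k,\ell}=\varepsilon^2\lambda_{k,\ell}^2+\kappa\lambda_{k,\ell}$. On zero-mean grid functions, $\mathcal G_N=\Delta tL_N(I-e^{-\Delta tL_N})^{-1}$ is the multiplier $\frac{\Delta t\Lambda_{k,\ell}}{1-e^{-\Delta t\Lambda_{k,\ell}}}$ on modes $(k,\ell)\ne(0,0)$. *)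

From mathcomp Require Import all_boot all_order all_algebra.
From mathcomp Require Import complex.
From mathcomp Require Import all_classical all_reals all_analysis.
Set Implicit Arguments. Unset Strict Implicit. Unset Printing Implicit Defensive.
Import Order.TTheory GRing.Theory Num.Theory.
Local Open Scope ring_scope.
Local Open Scope complex_scope.

Notation gidx K := 'I_(2 * K + 1).

(* The frequency attached to an index k' : 'I_(2K+1) is k = k' - K in {-K..K}. *)
Definition freq (K : nat) (k : gidx K) : int := (nat_of_ord k)%:Z - K%:Z.

Definition hstep (R : realType) (K : nat) : R := ((2 * K + 1)%N%:R)^-1.

Definition gpt (R : realType) (K : nat) (i : gidx K) : R := (nat_of_ord i)%:R * hstep R K.

Definition cis (R : realType) (t : R) : R[i] := cos t +i* sin t.

Definition fmode (R : realType) (K : nat) (k l i j : gidx K) : R[i] :=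
  cis (2 * pi * ((freq k)%:~R * gpt R i + (freq l)%:~R * gpt R j)).

Definition rgrid (R : realType) (K : nat) := gidx K -> gidx K -> R.
Definition cgrid (R : realType) (K : nat) := gidx K -> gidx K -> R[i].

(* Discrete Fourier coefficients: f_ij = sum_{k,l} fhat_kl exp(2 pi i (k x_i + l y_j)) *)
Definition fhat (R : realType) (K : nat) (f : rgrid R K) (k l : gidx K) : R[i] :=
  ((2 * K + 1)%N%:R ^+ 2)^-1 *
  \sum_(i : gidx K) \sum_(j : gidx K) (f i j)%:C * (fmode R k l i j)^*.

Definition fmult (R : realType) (K : nat) (m : int -> int -> R[i]) (f : rgrid R K)
  : cgrid R K :=
  fun i j => \sum_(k : gidx K) \sum_(l : gidx K)
               m (freq k) (freq l) * fhat f k l * fmode R k l i j.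

Definition lam (R : realType) (k l : int) : R :=
  (2 * k%:~R * pi) ^+ 2 + (2 * l%:~R * pi) ^+ 2.

Definition Lam (R : realType) (eps kappa : R) (k l : int) : R :=
  eps ^+ 2 * lam R k l ^+ 2 + kappa * lam R k l.

Definition DNx (R : realType) (K : nat) (f : rgrid R K) : cgrid R K :=
  fmult (fun k l => 0 +i* (2 * pi * k%:~R)) f.
Definition DNy (R : realType) (K : nat) (f : rgrid R K) : cgrid R K :=
  fmult (fun k l => 0 +i* (2 * pi * l%:~R)) f.
Definition LapN (R : realType) (K : nat) (f : rgrid R K) : cgrid R K :=
  fmult (fun k l => (- lam R k l)%:C) f.
Definition LN (R : realType) (K : nat) (eps kappa : R) (f : rgrid R K) : cgrid R K :=
  fmult (fun k l => (Lam eps kappa k l)%:C) f.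
(* G_N on zero-mean functions; the (0,0) multiplier is irrelevant there (set to 0). *)
Definition GN (R : realType) (K : nat) (eps kappa dt : R) (f : rgrid R K) : cgrid R K :=
  fmult (fun k l => if (k == 0) && (l == 0) then 0
                    else (dt * Lam eps kappa k l
                          / (1 - expR (- (dt * Lam eps kappa k l))))%:C) f.

(* <g1, g2> = h^2 sum g1 g2  (Re of h^2 sum g1 conj(g2); equal for real grid functions) *)
Definition ginner (R : realType) (K : nat) (g1 g2 : cgrid R K) : R :=
  hstep R K ^+ 2 * \sum_(i : gidx K) \sum_(j : gidx K) complex.Re (g1 i j * (g2 i j)^*).

Definition gnorm2 (R : realType) (K : nat) (g : cgrid R K) : R := ginner g g.

Definition gradnorm2 (R : realType) (K : nat) (f : rgrid R K) : R :=
  gnorm2 (DNx f) + gnorm2 (DNy f).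

Definition liftC (R : realType) (K : nat) (f : rgrid R K) : cgrid R K :=
  fun i j => (f i j)%:C.

Definition C4 (R : realType) : R := (1 - expR (-2))^-1.
Definition gamma0 (R : realType) (kappa : R) : R := 3 * C4 R * (1 + kappa).
Definition kstar (R : realType) (kappa : R) : R := kappa - 8^-1.
Definition alpha0 (R : realType) (kappa : R) : R :=
  ln ((gamma0 kappa + 2^-1 * kappa) / (gamma0 kappa - 2^-1 * kappa)).

From mathcomp Require Import all_boot all_order all_algebra.
From mathcomp Require Import complex.
From mathcomp Require Import all_classical all_reals all_analysis.
From mathcomp Require Import ring lra zify.
Set Implicit Arguments.
Unset Strict Implicit.
Unset Printing Implicit Defensive.

Import Order.TTheory GRing.Theory Num.Theory.
Local Open Scope ring_scope.
Local Open Scope complex_scope.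

(* All operators are Fourier multipliers, so by the orthogonality of the
   discrete modes both sides are sums over (k, l) of |fhat_{k,l}|^2 times a
   scalar symbol; the mode (0, 0) vanishes by the zero mean, and it remains to
   compare symbols at lambda > 0.  With Lambda = eps^2 lambda^2 + kappa lambda
   and x = dt Lambda, the symbol of G_N / dt - L_N is Lambda / (e^x - 1).
   For x <= alpha0 the definition of alpha0 gives e^x - 1 <= kappa / (gamma0 -
   kappa/2), so this symbol alone exceeds lambda (gamma0 - kappa/2), which is
   enough as kappa >= 1/4.  For x > alpha0 the bound on A gives
   B^4 <= T v^3 with B = gamma0 - kappa/4, v = eps^2 lambda + kappa and
   T = A dt^2 lambda, and the sum-of-squares inequality
   B^4 + v^4/2 >= (33/32) B v^3 turns this into the linear bound
   B + 1/16 <= T + v/2, which is the required bound at lambda even without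
   the nonnegative term Lambda / (e^x - 1). *)

(* Under a big operator [^*] parses as [Num.conj]; elsewhere it is the
   complex-scope [conjc], hence the explicit [%R] in statements. *)
Lemma conj_real (R : rcfType) (x : R) : (x%:C)^*%R = x%:C.
Proof. exact: conjc_real. Qed.

Lemma ReMr (R : rcfType) (z : R[i]) (x : R) : complex.Re (z * x%:C) = complex.Re z * x.
Proof. by case: z => a b; simpc. Qed.

Section Cis.
Variable R : realType.
Implicit Types (a b t : R).

Lemma cis0 : cis (0 : R) = 1.
Proof. by rewrite /cis cos0 sin0. Qed.

Lemma cisD a b : cis (a + b) = cis a * cis b.
Proof. by rewrite /cis cosD sinD; simpc; congr (_ +i* _); ring. Qed.

Lemma conj_cis a : (cis a)^*%R = cis (- a).
Proof. by rewrite /cis cosN sinN. Qed.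

Lemma cisMn t n : cis (t *+ n) = cis t ^+ n.
Proof. by elim: n => [|n IH]; rewrite ?cis0 // mulrS cisD IH exprS. Qed.

Lemma cis_2piz (m : int) : cis (2 * pi * m%:~R : R) = 1.
Proof.
have cis_2pin (n : nat) : cis (2 * pi * n%:R : R) = 1.
  by rewrite mulr_natr mulr_natl cisMn /cis cos2pi sin2pi expr1n.
case: m => n; first exact: cis_2pin.
by rewrite NegzE mulrNz mulrN -conj_cis -pmulrn cis_2pin conjC1.
Qed.

Lemma cos_eq1_lt_2pi t : `|t| < pi *+ 2 -> cos t = 1 -> t = 0.
Proof.
rewrite -cos_norm => ht c1; apply/normr0_eq0/eqP; apply: contra_eqT c1 => t0.
have s_gt0 : 0 < sin (`|t| / 2).
  have t_gt0 : 0 < `|t| by rewrite normr_gt0 -normr_eq0.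
  by apply: sin_gt0_pi; apply/andP; split; lra.
have -> : `|t| = (`|t| / 2) *+ 2 by rewrite -mulr_natr divfK.
by rewrite cos_mulr2n cos2sin2; nra.
Qed.

End Cis.

Section GridCharacterSums.
Variables (R : realType) (K : nat).
Local Notation N := (2 * K + 1)%N.

Lemma gridN_gt0 : (0 < N)%N.
Proof. by rewrite addn1. Qed.

Lemma hstep_gt0 : 0 < hstep R K.
Proof. by rewrite /hstep invr_gt0 ltr0n gridN_gt0. Qed.

Lemma sum_cis_grid (m : int) : (`|m| < N)%N ->
  \sum_(i : gidx K) cis (2 * pi * m%:~R * gpt R i) = if m == 0 then N%:R else 0.
Proof.
move=> m_lt; have [->|m0] := eqP.
  by under eq_bigr do rewrite mulr0 mul0r cis0; rewrite sumr_const card_ord.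
set z := cis (2 * pi * m%:~R * hstep R K).
have -> : \sum_(i : gidx K) cis (2 * pi * m%:~R * gpt R i) = \sum_(i < N) z ^+ i.
  by apply: eq_bigr => i _; rewrite /z -cisMn -mulrnAr -[hstep R K *+ i]mulr_natl.
have zN : z ^+ N = 1.
  by rewrite /z -cisMn -mulrnAr -[_ *+ N]mulr_natr mulVf ?mulr1 ?cis_2piz.
have z1 : z != 1.
  have mh_lt1 : `|m%:~R * hstep R K| < 1.
    rewrite normrM (gtr0_norm hstep_gt0) -intr_norm -abszE.
    by rewrite ltr_pdivrMr ?ltr0n ?gridN_gt0 // mul1r ltr_nat.
  apply/eqP => /(congr1 (@complex.Re R)); rewrite /z /= => /cos_eq1_lt_2pi t0; apply: m0.
  have /t0 : `|2 * pi * m%:~R * hstep R K| < pi *+ 2.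
    rewrite -mulrA normrM gtr0_norm ?mulr_gt0 ?pi_gt0 //.
    have := pi_gt0 R; nra.
  move/eqP; rewrite !mulf_eq0 pnatr_eq0 intr_eq0 (gt_eqF hstep_gt0) (gt_eqF (pi_gt0 R)).
  by rewrite orbF => /eqP.
by have := expfS_eq1 z (2 * K); rewrite -addn1 zN eqxx (negbTE z1) => /esym/eqP.
Qed.
End GridCharacterSums.

Lemma freqB K (k k' : gidx K) : freq k - freq k' = (k : nat)%:Z - (k' : nat)%:Z.
Proof. by rewrite /freq; ring. Qed.

Lemma freqB_eq0 K (k k' : gidx K) : (freq k - freq k' == 0) = (k == k').
Proof. by rewrite freqB subr_eq0 eqz_nat. Qed.

Lemma abs_freqB_lt K (k k' : gidx K) : (`|freq k - freq k'| < 2 * K + 1)%N.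
Proof. by rewrite freqB; have := ltn_ord k; have := ltn_ord k'; lia. Qed.

Section Parseval.
Variables (R : realType) (K : nat).
Local Notation N := (2 * K + 1)%N.
Local Notation mode := (fmode R).

Lemma sum_fmode_mulJ (k l k' l' : gidx K) :
  \sum_(i : gidx K) \sum_(j : gidx K) mode k l i j * (mode k' l' i j)^* =
  if (k == k') && (l == l') then N%:R ^+ 2 else 0.
Proof.
have split_mode i j : mode k l i j * (mode k' l' i j)^* =
    cis (2 * pi * (freq k - freq k')%:~R * gpt R i) *
    cis (2 * pi * (freq l - freq l')%:~R * gpt R j).
  by rewrite /fmode conj_cis -!cisD; congr cis; rewrite !intrB; ring.
under eq_bigr do under eq_bigr do rewrite split_mode.
rewrite -big_distrlr /= !sum_cis_grid ?abs_freqB_lt // !freqB_eq0.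
by case: (k == k'); case: (l == l'); rewrite ?mul0r ?mulr0.
Qed.

Lemma sum_fmode_mulJ_pair (p q : gidx K * gidx K) :
  \sum_(x : gidx K * gidx K) mode p.1 p.2 x.1 x.2 * (mode q.1 q.2 x.1 x.2)^* =
  if p == q then N%:R ^+ 2 else 0.
Proof.
case: p q => [k l] [k' l'].
rewrite -(pair_bigA _ (fun i j => mode k l i j * (mode k' l' i j)^*)).
by rewrite sum_fmode_mulJ xpair_eqE.
Qed.

Lemma sum_modes_mulJ (a b : gidx K * gidx K -> R[i]) :
  \sum_(x : gidx K * gidx K)
     (\sum_p a p * mode p.1 p.2 x.1 x.2) * (\sum_q b q * mode q.1 q.2 x.1 x.2)^* =
  N%:R ^+ 2 * \sum_p a p * (b p)^*.
Proof.
under eq_bigr do rewrite rmorph_sum big_distrlr /=.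
rewrite exchange_big mulr_sumr; apply: eq_bigr => p _.
rewrite exchange_big /=.
under eq_bigr => q _.
  under eq_bigr do rewrite rmorphM mulrACA.
  rewrite -mulr_sumr sum_fmode_mulJ_pair.
  over.
rewrite (bigD1 p) //= eqxx big1 ?addr0 => [|q qp]; first by rewrite mulrC.
by rewrite eq_sym (negbTE qp) mulr0.
Qed.

Lemma fmultE m (f : rgrid R K) i j : fmult m f i j =
  \sum_(p : gidx K * gidx K) m (freq p.1) (freq p.2) * fhat f p.1 p.2 * mode p.1 p.2 i j.
Proof. by rewrite /fmult pair_bigA. Qed.

Lemma ginnerE (g1 g2 : cgrid R K) : ginner g1 g2 =
  hstep R K ^+ 2 * complex.Re (\sum_(x : gidx K * gidx K) g1 x.1 x.2 * (g2 x.1 x.2)^*).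
Proof. by rewrite /ginner pair_bigA raddf_sum. Qed.

Lemma hstep2_Re_gridN2M (z : R[i]) :
  hstep R K ^+ 2 * complex.Re (N%:R ^+ 2 * z) = complex.Re z.
Proof.
by rewrite -natrX mulr_natl raddfMn -mulr_natl natrX mulrA -exprMn mulVf ?expr1n ?mul1r.
Qed.

Definition fhat_norm2 (f : rgrid R K) (k l : gidx K) : R :=
  complex.Re (fhat f k l) ^+ 2 + complex.Im (fhat f k l) ^+ 2.

Lemma fhat_mulJ (f : rgrid R K) k l :
  fhat f k l * (fhat f k l)^*%R = (fhat_norm2 f k l)%:C.
Proof. by rewrite add_Re2_Im2 normCK. Qed.

Lemma fhat_norm2_ge0 (f : rgrid R K) k l : 0 <= fhat_norm2 f k l.
Proof. by rewrite addr_ge0 ?sqr_ge0. Qed.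

Lemma ginner_fmult m1 m2 (f : rgrid R K) : ginner (fmult m1 f) (fmult m2 f) =
  \sum_k \sum_l
    complex.Re (m1 (freq k) (freq l) * (m2 (freq k) (freq l))^*) * fhat_norm2 f k l.
Proof.
rewrite ginnerE; under eq_bigr do rewrite !fmultE.
rewrite sum_modes_mulJ hstep2_Re_gridN2M raddf_sum [RHS]pair_bigA /=; apply: eq_bigr => p _.
by rewrite rmorphM mulrACA fhat_mulJ ReMr.
Qed.

Lemma sum_real_mul_fmode (f : rgrid R K) (p : gidx K * gidx K) :
  \sum_(x : gidx K * gidx K) (f x.1 x.2)%:C * mode p.1 p.2 x.1 x.2 =
  N%:R ^+ 2 * (fhat f p.1 p.2)^*%R.
Proof.
rewrite /fhat rmorphM fmorphV rmorphXn rmorph_nat mulVKf ?expf_neq0 ?pnatr_eq0 ?addn1 //.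
rewrite pair_bigA rmorph_sum; apply: eq_bigr => x _.
by rewrite rmorphM /= conjCK conj_real.
Qed.

Lemma ginner_fmult_liftC m (f : rgrid R K) : ginner (fmult m f) (liftC f) =
  \sum_k \sum_l complex.Re (m (freq k) (freq l)) * fhat_norm2 f k l.
Proof.
rewrite ginnerE; under eq_bigr do rewrite fmultE /liftC mulr_suml.
rewrite exchange_big /=.
under eq_bigr => p _.
  under eq_bigr do rewrite conj_real -mulrA [_ * (f _ _)%:C]mulrC.
  rewrite -mulr_sumr sum_real_mul_fmode mulrCA.
  over.
rewrite -mulr_sumr hstep2_Re_gridN2M raddf_sum [RHS]pair_bigA /=; apply: eq_bigr => p _.
by rewrite -mulrA fhat_mulJ ReMr.
Qed.
End Parseval.

Lemma quartic_ge (R : realFieldType) (v B : R) :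
  33 / 32 * B * v ^+ 3 <= v ^+ 4 / 2 + B ^+ 4.
Proof.
have sos : v ^+ 4 / 2 + B ^+ 4 - 33 / 32 * B * v ^+ 3 =
    2^-1 * (v ^+ 2 - 33 / 32 * B * v - 9 / 10 * B ^+ 2) ^+ 2
    + 2560 / 3771 * (B * (3771 / 5120 * v - 297 / 320 * B)) ^+ 2
    + 107 / 10475 * (B ^+ 2) ^+ 2 by field.
rewrite -subr_ge0 sos.
have := sqr_ge0 (v ^+ 2 - 33 / 32 * B * v - 9 / 10 * B ^+ 2).
have := sqr_ge0 (B * (3771 / 5120 * v - 297 / 320 * B)).
have := sqr_ge0 (B ^+ 2).
lra.
Qed.

Lemma ler_of_quartic_le_cube (R : realFieldType) (B T v : R) :
  2 <= B -> 0 < v -> B ^+ 4 <= T * v ^+ 3 -> B + 16^-1 <= T + v / 2.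
Proof.
move=> B_ge2 v_gt0 B4_le.
have v3_gt0 : 0 < v ^+ 3 by rewrite exprn_gt0.
have : 33 / 32 * B * v ^+ 3 <= (T + v / 2) * v ^+ 3.
  have -> : (T + v / 2) * v ^+ 3 = T * v ^+ 3 + v ^+ 4 / 2 by ring.
  by have := quartic_ge v B; lra.
rewrite ler_pM2r // => H; lra.
Qed.

Lemma C4_ge1 (R : realType) : 1 <= C4 R.
Proof.
have e_gt0 := expR_gt0 (-2 : R).
have e_lt1 : expR (-2 : R) < 1 by rewrite expR_lt1 oppr_lt0.
by rewrite /C4 invf_ge1 ?subr_gt0 //; lra.
Qed.

Lemma gamma0_ge (R : realType) (kappa : R) :
  0 <= kappa -> 3 * (1 + kappa) <= gamma0 kappa.
Proof.
move=> kappa_ge0; rewrite /gamma0 -mulrA [C4 R * _]mulrC mulrA ler_peMr ?C4_ge1 //.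
by rewrite mulr_ge0 ?addr_ge0.
Qed.

Lemma GN_symbol_sub (R : realType) (dt L : R) : 0 < dt -> 0 < L ->
  dt^-1 * (dt * L / (1 - expR (- (dt * L)))) - L = L / (expR (dt * L) - 1).
Proof.
move=> dt_gt0 L_gt0; have e_gt1 : 1 < expR (dt * L) by rewrite expR_gt1 mulr_gt0.
rewrite expRN; field.
by rewrite !subr_eq0 !gt_eqF ?expR_gt0 ?invf_lt1 ?expR_gt0.
Qed.

Section ModeBound.
Variables (R : realType) (eps kappa dt A : R).
Hypotheses (eps_gt0 : 0 < eps) (kappa_ge : 4^-1 <= kappa) (dt_gt0 : 0 < dt).
Hypothesis A_ge :
  (gamma0 kappa - 4^-1 * kappa) ^+ 4 / (alpha0 kappa ^+ 2 * eps ^+ 2) <= A.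

Local Notation g := (gamma0 kappa).
Local Notation Lam lam := (eps ^+ 2 * lam ^+ 2 + kappa * lam).

Lemma kappa_gt0 : 0 < kappa.
Proof. exact: lt_le_trans kappa_ge. Qed.

Lemma half_kappa_lt_gamma0 : 2^-1 * kappa < g.
Proof. by have := gamma0_ge (ltW kappa_gt0); have := kappa_gt0; lra. Qed.

Lemma alpha0_gt0 : 0 < alpha0 kappa.
Proof.
have kg := half_kappa_lt_gamma0; have k_gt0 := kappa_gt0.
by rewrite /alpha0 ln_gt0 // ltr_pdivlMr; lra.
Qed.

Lemma expR_alpha0_sub1 : expR (alpha0 kappa) - 1 = kappa / (g - 2^-1 * kappa).
Proof.
have kg := half_kappa_lt_gamma0; have k_gt0 := kappa_gt0.
by rewrite /alpha0 lnK ?posrE ?divr_gt0; [field | ..]; lra.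
Qed.

Lemma Lam_gt0 (lam : R) : 0 < lam -> 0 < Lam lam.
Proof.
move=> lam_gt0; apply: ltr_wpDl; first exact: mulr_ge0 (sqr_ge0 _) (sqr_ge0 _).
exact: mulr_gt0 kappa_gt0 _.
Qed.

Lemma mode_bound_small (lam : R) : 0 < lam -> dt * Lam lam <= alpha0 kappa ->
  lam * (g - 2^-1 * kappa) <= Lam lam / (expR (dt * Lam lam) - 1).
Proof.
move=> lam_gt0 x_le; have L_gt0 := Lam_gt0 lam_gt0.
have e_gt0 : 0 < expR (dt * Lam lam) - 1 by rewrite subr_gt0 expR_gt1 mulr_gt0.
have e_le : expR (dt * Lam lam) - 1 <= kappa / (g - 2^-1 * kappa).
  by rewrite -expR_alpha0_sub1 lerD2r ler_expR.
rewrite ler_pdivlMr //; set c := g - 2^-1 * kappa.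
have c_gt0 : 0 < c by rewrite /c subr_gt0 half_kappa_lt_gamma0.
apply: (le_trans (ler_wpM2l _ e_le)); first by rewrite mulr_ge0 ?ltW.
have -> : lam * c * (kappa / c) = kappa * lam by field; exact: lt0r_neq0.
by rewrite lerDr mulr_ge0 ?sqr_ge0.
Qed.

Lemma gamma0_sub_quarter_ge2 : 2 <= g - 4^-1 * kappa.
Proof. by have := gamma0_ge (ltW kappa_gt0); have := kappa_gt0; lra. Qed.

Lemma A_ge0 : 0 <= A.
Proof.
apply: le_trans A_ge; apply: divr_ge0; last by rewrite mulr_ge0 ?sqr_ge0.
by apply: exprn_ge0; have := gamma0_sub_quarter_ge2; lra.
Qed.

Lemma mode_bound_large (lam : R) : 0 < lam -> alpha0 kappa <= dt * Lam lam ->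
  g * lam <= (2^-1 * eps ^+ 2 + A * dt ^+ 2) * lam ^+ 2 + kstar kappa * lam.
Proof.
move=> lam_gt0 alpha0_le; have k_gt0 := kappa_gt0; have a_gt0 := alpha0_gt0.
have B_ge2 := gamma0_sub_quarter_ge2; have A_ge0 := A_ge0.
have den_gt0 : 0 < alpha0 kappa ^+ 2 * eps ^+ 2 by rewrite mulr_gt0 ?exprn_gt0.
have B4_le : (g - 4^-1 * kappa) ^+ 4 <= A * (alpha0 kappa ^+ 2 * eps ^+ 2).
  by rewrite -ler_pdivrMr.
have v_gt0 : 0 < eps ^+ 2 * lam + kappa.
  by apply: ltr_wpDl; first exact: mulr_ge0 (sqr_ge0 _) (ltW _).
have key : (g - 4^-1 * kappa) ^+ 4 <= A * dt ^+ 2 * lam * (eps ^+ 2 * lam + kappa) ^+ 3.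
  apply: le_trans B4_le _.
  have x2_ge : alpha0 kappa ^+ 2 <= (dt * Lam lam) ^+ 2 by nra.
  have -> : A * dt ^+ 2 * lam * (eps ^+ 2 * lam + kappa) ^+ 3 =
      A * ((dt * Lam lam) ^+ 2 * eps ^+ 2)
      + A * dt ^+ 2 * lam * (eps ^+ 2 * lam + kappa) ^+ 2 * kappa.
    by ring.
  apply: ler_wpDr; first by repeat apply: mulr_ge0; rewrite ?sqr_ge0 // ltW.
  by rewrite ler_wpM2l // ler_wpM2r ?sqr_ge0.
have := ler_of_quartic_le_cube B_ge2 v_gt0 key => cube_bound.
have g_le : g <= (2^-1 * eps ^+ 2 + A * dt ^+ 2) * lam + kstar kappa.
  by have := kappa_ge; rewrite /kstar; lra.
have -> : (2^-1 * eps ^+ 2 + A * dt ^+ 2) * lam ^+ 2 + kstar kappa * lam =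
  ((2^-1 * eps ^+ 2 + A * dt ^+ 2) * lam + kstar kappa) * lam by ring.
by rewrite ler_pM2r.
Qed.

Lemma mode_ineq (lam : R) : 0 < lam ->
  g * lam <= (2^-1 * eps ^+ 2 + A * dt ^+ 2) * lam ^+ 2 + kstar kappa * lam
    + (dt^-1 * (dt * Lam lam / (1 - expR (- (dt * Lam lam)))) - Lam lam).
Proof.
move=> lam_gt0; have L_gt0 := Lam_gt0 lam_gt0.
have a_ge0 : 0 <= (2^-1 * eps ^+ 2 + A * dt ^+ 2) * lam ^+ 2.
  apply: mulr_ge0 (sqr_ge0 _); apply: addr_ge0; apply: mulr_ge0; by rewrite ?sqr_ge0 ?A_ge0.
rewrite GN_symbol_sub //; have [small|large] := lerP (dt * Lam lam) (alpha0 kappa).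
  have := mode_bound_small lam_gt0 small; have := kappa_ge; rewrite /kstar; nra.
have V_ge0 : 0 <= Lam lam / (expR (dt * Lam lam) - 1).
  by rewrite divr_ge0 ?ltW // subr_gt0 expR_gt1 mulr_gt0.
by have := mode_bound_large lam_gt0 (ltW large); lra.
Qed.

End ModeBound.

Lemma lam_gt0 (R : realType) (k l : int) : (k != 0) || (l != 0) -> 0 < lam R k l.
Proof.
have sqr_gt0 (m : int) : m != 0 -> 0 < (2 * m%:~R * pi : R) ^+ 2.
  move=> m0; rewrite lt_def sqr_ge0 andbT sqrf_eq0 !mulf_eq0 intr_eq0 (negbTE m0).
  by rewrite (gt_eqF (pi_gt0 R)) pnatr_eq0.
by case/orP => /sqr_gt0 ?; [apply: ltr_pwDl | apply: ltr_wpDl]; rewrite ?sqr_ge0.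
Qed.

Section SpectralForms.
Variables (R : realType) (K : nat).
Implicit Types (f : rgrid R K).

Lemma fmult_lincomb (c : R[i]) m1 m2 f :
  (fun i j => c * fmult m1 f i j - fmult m2 f i j) =
  fmult (fun k l => c * m1 k l - m2 k l) f.
Proof.
apply/funext => i; apply/funext => j; rewrite /fmult mulr_sumr -sumrB.
by apply: eq_bigr => k _; rewrite mulr_sumr -sumrB; apply: eq_bigr => l _; ring.
Qed.

Lemma gnorm2_LapN f :
  gnorm2 (LapN f) = \sum_k \sum_l lam R (freq k) (freq l) ^+ 2 * fhat_norm2 f k l.
Proof.
rewrite /gnorm2 ginner_fmult; apply: eq_bigr => k _; apply: eq_bigr => l _.
by rewrite conj_real -rmorphM /= mulrNN expr2.
Qed.

Lemma gradnorm2E f :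
  gradnorm2 f = \sum_k \sum_l lam R (freq k) (freq l) * fhat_norm2 f k l.
Proof.
rewrite /gradnorm2 /gnorm2 !ginner_fmult -big_split; apply: eq_bigr => k _.
by rewrite -big_split; apply: eq_bigr => l _; rewrite /= /lam; simpc; ring.
Qed.

Lemma fhat_norm2_mean0 f k l : \sum_i \sum_j f i j = 0 ->
  freq k = 0 -> freq l = 0 -> fhat_norm2 f k l = 0.
Proof.
move=> f_mean0 k0 l0; rewrite /fhat_norm2 (_ : fhat f k l = 0) ?expr2 ?mulr0 ?addr0 //.
rewrite /fhat /fmode k0 l0.
under eq_bigr do under eq_bigr do rewrite !mul0r addr0 mulr0 cis0 conjC1 mulr1.
by under eq_bigr do rewrite -rmorph_sum; rewrite -rmorph_sum f_mean0 mulr0.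
Qed.
End SpectralForms.

Lemma Re_GN_LN_symbol (R : realType) (eps kappa dt : R) (k l : int) :
  (k != 0) || (l != 0) ->
  complex.Re (dt^-1%:C * (if (k == 0) && (l == 0) then 0
                          else (dt * Lam eps kappa k l
                                / (1 - expR (- (dt * Lam eps kappa k l))))%:C)
              - (Lam eps kappa k l)%:C) =
  dt^-1 * (dt * Lam eps kappa k l / (1 - expR (- (dt * Lam eps kappa k l))))
  - Lam eps kappa k l.
Proof. by rewrite -negb_and => /negbTE ->; rewrite -rmorphM -rmorphB. Qed.

Theorem proposition2p2 (R : realType) (K : nat) (eps kappa dt A : R) :
  0 < eps -> 4^-1 <= kappa -> 0 < dt ->
  (gamma0 kappa - 4^-1 * kappa) ^+ 4 / (alpha0 kappa ^+ 2 * eps ^+ 2) <= A ->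
  forall f : gidx K -> gidx K -> R,
    \sum_(i : gidx K) \sum_(j : gidx K) f i j = 0 ->
    (2^-1 * eps ^+ 2 + A * dt ^+ 2) * gnorm2 (LapN f)
    + kstar kappa * gradnorm2 f
    + ginner (fun i j => dt^-1%:C * GN eps kappa dt f i j - LN eps kappa f i j) (liftC f)
    >= gamma0 kappa * gradnorm2 f.
Proof.
move=> eps_gt0 kappa_ge dt_gt0 A_ge f f_mean0.
rewrite /GN /LN fmult_lincomb ginner_fmult_liftC gnorm2_LapN gradnorm2E.
rewrite !mulr_sumr -!big_split /=; apply: ler_sum => k _.
rewrite !mulr_sumr -!big_split /=; apply: ler_sum => l _.
have [nonzero | ] := boolP ((freq k != 0) || (freq l != 0)); last first.
  by rewrite negb_or !negbK => /andP[/eqP k0 /eqP l0]; rewrite fhat_norm2_mean0 // !mulr0.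
have weighted (a b g lam w X : R) : 0 <= w -> g * lam <= a * lam ^+ 2 + b * lam + X ->
    g * (lam * w) <= a * (lam ^+ 2 * w) + b * (lam * w) + X * w.
  by move=> w_ge0 /(ler_wpM2r w_ge0); rewrite !mulrDl -!mulrA.
rewrite Re_GN_LN_symbol //; apply: weighted; first exact: fhat_norm2_ge0.
by rewrite /Lam; apply: mode_ineq => //; apply: lam_gt0.
Qed.
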